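(* Let $K$ be an algebraically closed field, complete with respect to a non-trivial non-archimedean absolute value $|\cdot|=|\cdot|_v$, with $\mathrm{char}(K)=0$ or $\mathrm{char}(K)>d$. Let $f\in\mathrm{Poly}_{N,d}(K)$ and $D\in\mathrm{Div}^*(\mathbb{P}^N)$ over $K$. Then (1) $\lambda_v(f_*(D))\le d\max\{\mathcal{B}_v(f),\lambda_v(D)\}$; (2) if $\lambda_v(D)>\mathcal{B}_v(f)$, then $\lambda_v(f_*(D))=d\lambda_v(D)$.
   Context: $N\ge1$, $d\ge2$. $\mathrm{Ind}^*(N,d)$ is the set of multi-indices $I=(I_0,\dots,I_N)$ with $\sum I_j=d$, $0<I_N<d$, and $\mathbf{x}^I=\prod x_j^{I_j}$. $\mathrm{Poly}_{N,d}(K)$ is the set of tuples $(a_{i,I})_{0\le i<N,I\in\mathrm{Ind}^*(N,d)}$ in $K$, each giving $f=[f_0:\cdots:f_N]$, $f_i=x_i^d+\sum_Ia_{i,I}\mathbf{x}^I$ ($i<N$), $f_N=x_N^d$; $\mathcal{B}_v(f)=\log^+\max|a_{i,I}|^{1/I_N}$. $\mathrm{Div}^*(\mathbb{P}^N)$ is the set of effective divisors defined by a form $F_D$ with $F_D(x_0,\dots,x_{N-1},0)=\prod_{i<N}x_i^{e_i}$ ($e_i\ge0$); for such $D$, $\lambda_v(D)=\log^+\sup_{|\beta_0|=\cdots=|\beta_{N-1}|=1}\max\{|\beta_N|^{-1}:F_D(\beta_0,\dots,\beta_N)=0\}$. $f_*(D)$ is the push-forward divisor, defined by the form $\mathrm{Res}(F_D,f)$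 with $\mathrm{Res}(F,f)(y_0,\dots,y_{N-1},1)=\mathrm{Res}_{x_0,\dots,x_N}(F,y_0x_N^d-f_0,\dots,y_{N-1}x_N^d-f_{N-1})$ (Macaulay resultant); its $K$-points are exactly the images under $f$ of the $K$-points of $D$, and $f_*(D)\in\mathrm{Div}^*$. *)

From HB Require Import structures.
From mathcomp Require Import all_boot all_order all_algebra.
From mathcomp Require Import all_classical all_reals all_analysis.
From mathcomp Require mpoly.
Set Implicit Arguments. Unset Strict Implicit. Unset Printing Implicit Defensive.
Import Order.TTheory GRing.Theory Num.Theory.
Local Open Scope ring_scope.
Local Open Scope classical_set_scope.

Definition nonarch_complete_abs (K : fieldType) (R : realType) (v : K -> R) : Prop :=
  (forall x, 0 <= v x) /\
  (forall x, v x = 0 <-> x = 0) /\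
  (forall x y, v (x * y) = v x * v y) /\
  (forall x y, v (x + y) <= Num.max (v x) (v y)) /\
  (exists x, v x != 0 /\ v x != 1) /\
      (forall u : nat -> K,
         (forall e : R, 0 < e -> exists n0, forall m n, (n0 <= m)%N -> (n0 <= n)%N ->
              v (u m - u n) < e) ->
         exists l, forall e : R, 0 < e -> exists n0, forall n, (n0 <= n)%N ->
              v (u n - l) < e).

Definition midx (N d : nat) := {ffun 'I_N.+1 -> 'I_d.+1}.

Definition ind_star (N d : nat) (I : midx N d) : bool :=
  [&& (\sum_(j < N.+1) (I j : nat) == d)%N, (0 < I ord_max)%N & (I ord_max < d)%N].

Definition xpow (K : nzRingType) (N d : nat) (x : 'I_N.+1 -> K) (I : midx N d) : K :=
  \prod_(j < N.+1) x j ^+ I j.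

(* An element of Poly_{N,d}(K) is a tuple (a_{i,I})_{i<N, I in Ind^*(N,d)};
   we represent it by a : 'I_N -> midx N d -> K, only the values at
   I \in Ind^*(N,d) being relevant. *)
Definition polyND (K : nzRingType) (N d : nat) := 'I_N -> midx N d -> K.

Definition fcomp (K : nzRingType) (N d : nat) (a : polyND K N d)
    (x : 'I_N.+1 -> K) (i : 'I_N.+1) : K :=
  match unlift ord_max i with
  | Some i' => x i ^+ d + \sum_(I : midx N d | ind_star I) a i' I * xpow x I
  | None => x ord_max ^+ d
  end.

Definition logp (R : realType) (x : R) : R := ln (Num.max 1 x).

Definition Bv (K : nzRingType) (R : realType) (v : K -> R) (N d : nat)
    (a : polyND K N d) : R :=
  logp (\big[Num.max/0]_(i < N) \big[Num.max/0]_(I : midx N d | ind_star I)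
          (v (a i I) `^ ((I ord_max)%:R)^-1)).

(* the form F_D defining D: a nonzero homogeneous polynomial in x_0..x_N with
   F_D(x_0,...,x_{N-1},0) = prod_{i<N} x_i^{e_i}. *)
Definition div_star (K : nzRingType) (N : nat) (F : mpoly.mpoly N.+1 K) : Prop :=
  (exists deg : nat, all (fun m => mpoly.mdeg m == deg) (mpoly.msupp F)) /\
  exists e : 'I_N -> nat, forall x : 'I_N.+1 -> K, x ord_max = 0 ->
    mpoly.meval x F = \prod_(i < N) x (widen_ord (leqnSn N) i) ^+ e i.

Definition elogp (R : realType) (x : \bar R) : \bar R :=
  match x with
  | r%:E => (logp r)%:E
  | +oo%E => +oo%E
  | -oo%E => 0%E
  end.

(* lambda_v of a divisor, as a function of its set S of K-points (affine cone
   in K^{N+1}):  log^+ sup { |beta_N|^{-1} : beta in S, |beta_i| = 1 (i<N) } *)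
Definition lambda_set (K : nzRingType) (R : realType) (v : K -> R) (N : nat)
    (S : set ('I_N.+1 -> K)) : \bar R :=
  elogp (ereal_sup [set ((v (b ord_max))^-1)%:E | b in
           [set b | S b /\ forall i : 'I_N, v (b (widen_ord (leqnSn N) i)) = 1]]).

Definition zeroes (K : nzRingType) (N : nat) (F : mpoly.mpoly N.+1 K) :
    set ('I_N.+1 -> K) := [set b | mpoly.meval b F = 0].

Definition lambda_div (K : nzRingType) (R : realType) (v : K -> R) (N : nat)
    (F : mpoly.mpoly N.+1 K) : \bar R := lambda_set v (zeroes F).

(* K-points (affine cone) of the push-forward f_*(D): the images under f of
   the K-points of D (lines through them). *)
Definition push_zeroes (K : nzRingType) (N d : nat) (a : polyND K N d)
    (F : mpoly.mpoly N.+1 K) : set ('I_N.+1 -> K) :=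
  [set y | exists (c : K) (x : 'I_N.+1 -> K),
      zeroes F x /\ y = (fun i => c * fcomp a x i)].

Definition lambda_push (K : nzRingType) (R : realType) (v : K -> R) (N d : nat)
    (a : polyND K N d) (F : mpoly.mpoly N.+1 K) : \bar R :=
  lambda_set v (push_zeroes a F).

From HB Require Import structures.
From mathcomp Require Import all_boot all_order all_algebra.
From mathcomp Require Import all_classical all_reals all_analysis.
From mathcomp Require mpoly.
Import Order.TTheory GRing.Theory Num.Theory.
Local Open Scope ring_scope.
Set Implicit Arguments. Unset Strict Implicit. Unset Printing Implicit Defensive.
Import (canonicals) mpoly.

(* Normalise points so that max_(i<N) |x_i| = 1 and let A = exp B_v(f).  For
   i < N, f_i(x) is x_i^d plus monomials a_(i,I) x^I with |a_(i,I)| <= A^(I_N)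
   and 0 < I_N < d.  If A |x_N| < 1 these monomials have absolute value < 1, so
   by the ultrametric inequality |f_i(x)| = |x_i|^d: f(x) is again normalised
   with |f_N(x)|^-1 = (|x_N|^-1)^d, which gives the lower bound in (2).
   Conversely let M >= A bound |x_N|^-1 on the normalised points of D and let
   c f(x) be normalised.  After normalising x, M |x_N| < 1 is impossible by the
   previous argument, so M |x_N| >= 1, hence |f_i(x)| <= (M |x_N|)^d for all i,
   and |c f_N(x)|^-1 = (|c| |x_N|^d)^-1 <= M^d, which gives (1). *)

Definition nonarch_abs (K : fieldType) (R : realType) (v : K -> R) : Prop :=
  [/\ forall x, 0 <= v x, forall x, v x = 0 <-> x = 0,
      forall x y, v (x * y) = v x * v y &
      forall x y, v (x + y) <= Num.max (v x) (v y)].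

Lemma nonarch_complete_absW (K : fieldType) (R : realType) (v : K -> R) :
  nonarch_complete_abs v -> nonarch_abs v.
Proof. by case=> ge0 [eq0 [vM [vD _]]]; split. Qed.

Section NonarchAbs.
Variables (K : fieldType) (R : realType) (v : K -> R).
Hypothesis v_abs : nonarch_abs v.

Lemma absv_ge0 x : 0 <= v x. Proof. by case: v_abs. Qed.
Lemma absv_eq0 x : v x = 0 <-> x = 0. Proof. by case: v_abs. Qed.
Lemma absvM x y : v (x * y) = v x * v y. Proof. by case: v_abs. Qed.
Lemma absvD x y : v (x + y) <= Num.max (v x) (v y). Proof. by case: v_abs. Qed.

Lemma absv0 : v 0 = 0. Proof. exact/absv_eq0. Qed.

Lemma absv_gt0 x : (0 < v x) = (x != 0).
Proof.
rewrite lt_neqAle absv_ge0 andbT eq_sym; congr negb.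
by apply/eqP/eqP => /absv_eq0.
Qed.

Lemma absv1 : v 1 = 1.
Proof.
have v1_neq0 : v 1 != 0 by rewrite lt0r_neq0 // absv_gt0 oner_eq0.
by apply: (mulfI v1_neq0); rewrite -absvM !mulr1.
Qed.

Lemma absvX x n : v (x ^+ n) = v x ^+ n.
Proof. by elim: n => [|n IH]; rewrite ?absv1 // !exprS absvM IH. Qed.

Lemma absvN x : v (- x) = v x.
Proof.
have vN1 : v (-1) = 1.
  have /eqP : v (-1) ^+ 2 = 1 by rewrite -absvX sqrrN expr1n absv1.
  rewrite sqrf_eq1 => /orP[/eqP // | /eqP vN1].
  by have := absv_ge0 (-1); rewrite vN1 ler0N1.
by rewrite -mulN1r absvM vN1 mul1r.
Qed.

Lemma absvV x : v x^-1 = (v x)^-1.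
Proof.
have [->|x_neq0] := eqVneq x 0; first by rewrite invr0 absv0 invr0.
have vx_neq0 : v x != 0 by rewrite lt0r_neq0 // absv_gt0.
by apply: (mulfI vx_neq0); rewrite -absvM !mulfV ?absv1.
Qed.

Lemma absvD_dominant x y : v y < v x -> v (x + y) = v x.
Proof.
move=> lt_yx; apply/le_anti/andP; split.
  by rewrite (le_trans (absvD _ _)) // ge_max lexx ltW.
have := absvD (x + y) (- y); rewrite addrK absvN le_max => /orP[//|le_xy].
by move: lt_yx; rewrite ltNge le_xy.
Qed.

Lemma absv_sum_lt (I : Type) (r : seq I) (P : pred I) (F : I -> K) (B : R) :
  0 < B -> (forall i, P i -> v (F i) < B) -> v (\sum_(i <- r | P i) F i) < B.
Proof.
move=> B_gt0 ltFB; apply: (big_ind (fun z => v z < B)) => //; first by rewrite absv0.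
by move=> x y ? ?; rewrite (le_lt_trans (absvD _ _)) // gt_max; apply/andP.
Qed.

Lemma absv_sum_le (I : Type) (r : seq I) (P : pred I) (F : I -> K) (B : R) :
  0 <= B -> (forall i, P i -> v (F i) <= B) -> v (\sum_(i <- r | P i) F i) <= B.
Proof.
move=> B_ge0 leFB; apply: (big_ind (fun z => v z <= B)) => //; first by rewrite absv0.
by move=> x y ? ?; rewrite (le_trans (absvD _ _)) // ge_max; apply/andP.
Qed.

Lemma absv_prod (I : Type) (r : seq I) (P : pred I) (F : I -> K) :
  v (\prod_(i <- r | P i) F i) = \prod_(i <- r | P i) v (F i).
Proof. exact: (big_morph v absvM absv1). Qed.

End NonarchAbs.

Local Notation wid i := (widen_ord (leqnSn _) i).

Lemma wid_lift n (i : 'I_n) : wid i = lift ord_max i.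
Proof. by apply: val_inj; rewrite /= /bump leqNgt ltn_ord. Qed.

Lemma neq_ord_max_wid n (j : 'I_n.+1) : j != ord_max -> exists i : 'I_n, j = wid i.
Proof. by rewrite eq_sym => /unlift_some[i -> _]; exists i; rewrite wid_lift. Qed.

Section PolyMap.
Variables (K : fieldType) (N d : nat) (a : polyND K N d).

Definition fcomp_tail (x : 'I_N.+1 -> K) (i : 'I_N) : K :=
  \sum_(I : midx N d | ind_star I) a i I * xpow x I.

Lemma fcomp_wid (x : 'I_N.+1 -> K) i :
  fcomp a x (wid i) = x (wid i) ^+ d + fcomp_tail x i.
Proof. by rewrite /fcomp wid_lift liftK -wid_lift. Qed.

Lemma fcomp_max (x : 'I_N.+1 -> K) : fcomp a x ord_max = x ord_max ^+ d.
Proof. by rewrite /fcomp unlift_none. Qed.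

Lemma ind_star_sum_wid (I : midx N d) : ind_star I ->
  (\sum_(j < N.+1 | j != ord_max) I j)%N = (d - I ord_max)%N.
Proof.
case/and3P=> /eqP + _ _; rewrite (bigD1 ord_max) //= => sumI.
by rewrite -[X in (X - _)%N]sumI addKn.
Qed.

Lemma xpow_scale (k : K) (x : 'I_N.+1 -> K) (I : midx N d) : ind_star I ->
  xpow (fun j => k * x j) I = k ^+ d * xpow x I.
Proof.
case/and3P=> /eqP sumI _ _; rewrite /xpow.
under eq_bigr do rewrite exprMn.
by rewrite big_split /= prodrXr sumI.
Qed.

Lemma fcomp_scale (k : K) (x : 'I_N.+1 -> K) i :
  fcomp a (fun j => k * x j) i = k ^+ d * fcomp a x i.
Proof.
rewrite /fcomp; case: (unlift ord_max i) => [i'|]; last by rewrite exprMn.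
rewrite exprMn mulrDr big_distrr /=; congr (_ + _).
by apply: eq_bigr => I indI; rewrite xpow_scale // mulrCA.
Qed.

Lemma xpow_wid_eq0 (x : 'I_N.+1 -> K) (I : midx N d) : ind_star I ->
  (forall i, x (wid i) = 0) -> xpow x I = 0.
Proof.
move=> indI x0; rewrite /xpow (bigD1 ord_max) //=.
rewrite (eq_bigr (fun j => 0 ^+ I j)) => [|j /neq_ord_max_wid[i ->]]; last by rewrite x0.
rewrite prodrXr ind_star_sum_wid // expr0n subn_eq0 leqNgt.
by case/and3P: indI => _ _ ->; rewrite mulr0.
Qed.

Lemma fcomp_wid_eq0 (x : 'I_N.+1 -> K) i : (0 < d)%N ->
  (forall j, x (wid j) = 0) -> fcomp a x (wid i) = 0.
Proof.
move=> d_gt0 x0; rewrite fcomp_wid x0 expr0n eqn0Ngt d_gt0 add0r.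
by rewrite /fcomp_tail big1 // => I indI; rewrite (xpow_wid_eq0 indI x0) mulr0.
Qed.

End PolyMap.

Section PolyMapAbs.
Variables (K : fieldType) (R : realType) (v : K -> R) (N d : nat).
Variables (a : polyND K N d) (M : R).
Hypothesis v_abs : nonarch_abs v.
Hypothesis M_ge1 : 1 <= M.
Hypothesis absv_coef_le : forall i (I : midx N d), ind_star I -> v (a i I) <= M ^+ I ord_max.
Hypothesis d_gt0 : (0 < d)%N.

Local Notation absv_ge0 := (absv_ge0 v_abs).
Local Notation absvM := (absvM v_abs).
Local Notation absvX := (absvX v_abs).
Local Notation absvD := (absvD v_abs).
Local Notation absv0 := (absv0 v_abs).
Local Notation absv_eq0 := (absv_eq0 v_abs).
Local Notation absv_gt0 := (absv_gt0 v_abs).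
Local Notation absvV := (absvV v_abs).

Let M_gt0 : 0 < M := lt_le_trans ltr01 M_ge1.
Let M_ge0 : 0 <= M := ltW M_gt0.

Lemma absv_xpow_le (x : 'I_N.+1 -> K) (I : midx N d) :
  (forall j, v (x (wid j)) <= 1) -> v (xpow x I) <= v (x ord_max) ^+ I ord_max.
Proof.
move=> x_le1; rewrite /xpow (absv_prod v_abs) (bigD1 ord_max) //= absvX.
rewrite ler_piMr ?exprn_ge0 ?absv_ge0 // prodr_ile1 // => j /neq_ord_max_wid[i ->].
by rewrite absvX exprn_ge0 ?absv_ge0 // exprn_ile1 ?absv_ge0.
Qed.

Lemma absv_tail_term_le (x : 'I_N.+1 -> K) i (I : midx N d) :
  (forall j, v (x (wid j)) <= 1) -> ind_star I ->
  v (a i I * xpow x I) <= (M * v (x ord_max)) ^+ I ord_max.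
Proof.
move=> x_le1 indI; rewrite absvM exprMn.
by apply: ler_pM; rewrite ?absv_ge0 ?absv_coef_le ?absv_xpow_le.
Qed.

Lemma absv_tail_lt1 (x : 'I_N.+1 -> K) i :
  (forall j, v (x (wid j)) <= 1) -> M * v (x ord_max) < 1 -> v (fcomp_tail a x i) < 1.
Proof.
move=> x_le1 small; apply: (absv_sum_lt v_abs) => // I indI.
rewrite (le_lt_trans (absv_tail_term_le i x_le1 indI)) //.
rewrite exprn_ilt1 ?mulr_ge0 ?M_ge0 ?absv_ge0 //.
by case/and3P: indI => _ /lt0n_neq0.
Qed.

Lemma absv_tail_le (x : 'I_N.+1 -> K) i :
  (forall j, v (x (wid j)) <= 1) -> 1 <= M * v (x ord_max) ->
  v (fcomp_tail a x i) <= (M * v (x ord_max)) ^+ d.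
Proof.
move=> x_le1 big; apply: (absv_sum_le v_abs) => [|I indI].
  by rewrite exprn_ge0 // (le_trans ler01).
rewrite (le_trans (absv_tail_term_le i x_le1 indI)) // ler_weXn2l //.
by case/and3P: indI => _ _ /ltnW.
Qed.

Lemma absv_fcomp_wid_eq1 (x : 'I_N.+1 -> K) i :
  (forall j, v (x (wid j)) <= 1) -> M * v (x ord_max) < 1 ->
  v (fcomp a x (wid i)) = 1 <-> v (x (wid i)) = 1.
Proof.
move=> x_le1 small; have tail_lt1 := absv_tail_lt1 i x_le1 small.
rewrite fcomp_wid; split=> [f_eq1|x_eq1]; last first.
  have xd_eq1 : v (x (wid i) ^+ d) = 1 by rewrite absvX x_eq1 expr1n.
  by rewrite (absvD_dominant v_abs) xd_eq1.
apply/le_anti; rewrite x_le1 leNgt /=; apply/negP => x_lt1.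
suff : v (x (wid i) ^+ d + fcomp_tail a x i) < 1 by rewrite f_eq1 ltxx.
by rewrite (le_lt_trans (absvD _ _)) // gt_max tail_lt1 absvX expr_lt1 ?absv_ge0 ?x_lt1.
Qed.

Lemma push_bound_unit (x : 'I_N.+1 -> K) (c : K) i0 :
  (forall j, v (x (wid j)) <= 1) -> v (x (wid i0)) = 1 ->
  (forall i, v (c * fcomp a x (wid i)) = 1) ->
  (v (c * fcomp a x ord_max))^-1 <= M ^+ d \/
  (forall j, v (x (wid j)) = 1) /\ M * v (x ord_max) < 1.
Proof.
move=> x_le1 x_i0 cf_eq1; rewrite absvM fcomp_max absvX.
have [big|not_big] := boolP (1 <= M * v (x ord_max)); [left|right].
  have f_i0_le : v (fcomp a x (wid i0)) <= (M * v (x ord_max)) ^+ d.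
    rewrite fcomp_wid (le_trans (absvD _ _)) // ge_max absv_tail_le // andbT.
    by rewrite absvX x_i0 expr1n exprn_ege1.
  have cMt_ge1 : 1 <= v c * (M * v (x ord_max)) ^+ d.
    by rewrite -(cf_eq1 i0) absvM ler_wpM2l ?absv_ge0.
  have ct_gt0 : 0 < v c * v (x ord_max) ^+ d.
    rewrite lt_neqAle mulr_ge0 ?exprn_ge0 ?absv_ge0 // andbT eq_sym.
    apply: contraTneq cMt_ge1 => ct_eq0.
    by rewrite exprMn mulrCA ct_eq0 mulr0 ler10.
  rewrite invf_ple ?posrE ?exprn_gt0 ?M_gt0 //.
  by rewrite -[(M ^+ d)^-1]mulr1 ler_pdivrMl ?exprn_gt0 ?M_gt0 // mulrCA -exprMn.
have small : M * v (x ord_max) < 1 by rewrite ltNge.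
have f_eq1 j := absv_fcomp_wid_eq1 j x_le1 small.
have c_eq1 : v c = 1 by have := cf_eq1 i0; rewrite absvM (proj2 (f_eq1 i0) x_i0) mulr1.
by split=> // j; apply/f_eq1; have := cf_eq1 j; rewrite absvM c_eq1 mul1r.
Qed.

(* Rescale x so that max_(j < N) |x_j| = 1; c f(x) is unchanged if c absorbs k^-d. *)
Lemma push_bound (x : 'I_N.+1 -> K) (c : K) : (0 < N)%N ->
  (forall i, v (c * fcomp a x (wid i)) = 1) ->
  (v (c * fcomp a x ord_max))^-1 <= M ^+ d \/
  exists k, (forall j, v (k * x (wid j)) = 1) /\ M * v (k * x ord_max) < 1.
Proof.
move=> N_gt0 cf_eq1.
have [i0 _ x_i0_max] := @arg_maxP _ _ _ (Ordinal N_gt0) xpredT (fun i => v (x (wid i))) isT.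
have x_i0_neq0 : x (wid i0) != 0.
  apply/negP => /eqP x_i0_eq0.
  have x_eq0 j : x (wid j) = 0.
    apply/absv_eq0/le_anti; rewrite absv_ge0 andbT.
    by rewrite -absv0 -x_i0_eq0; apply: x_i0_max.
  have := cf_eq1 i0; rewrite fcomp_wid_eq0 // mulr0 absv0.
  by move/eqP; rewrite eq_sym oner_eq0.
pose k := (x (wid i0))^-1.
have k_neq0 : k != 0 by rewrite invr_eq0.
have scaleE i : c / k ^+ d * fcomp a (fun j => k * x j) i = c * fcomp a x i.
  by rewrite fcomp_scale mulrA divfK // expf_neq0.
have vx_i0_gt0 : 0 < v (x (wid i0)) by rewrite absv_gt0.
have [|||bound|[x'_eq1 small]] := @push_bound_unit (fun j => k * x j) (c / k ^+ d) i0.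
- by move=> j; rewrite absvM absvV ler_pdivrMl // mulr1; apply: x_i0_max.
- by rewrite absvM absvV mulVf // lt0r_neq0.
- by move=> i; rewrite scaleE.
- by left; rewrite -scaleE.
- by right; exists k.
Qed.

End PolyMapAbs.

Section Divisor.
Variables (K : fieldType) (N : nat) (F : mpoly.mpoly N.+1 K).

Lemma meval_homog_scale (deg : nat) (k : K) (x : 'I_N.+1 -> K) :
  all (fun m => mpoly.mdeg m == deg) (mpoly.msupp F) ->
  mpoly.meval (fun i => k * x i) F = k ^+ deg * mpoly.meval x F.
Proof.
move=> homF; rewrite !mpoly.mevalE big_distrr; apply: eq_big_seq => m m_supp /=.
under eq_bigr do rewrite exprMn.
by rewrite big_split /= prodrXr -mpoly.mdegE (eqP (allP homF m m_supp)) mulrCA.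
Qed.

Hypothesis F_star : div_star F.

Lemma div_star_zeroes_scale (k : K) (x : 'I_N.+1 -> K) :
  zeroes F x -> zeroes F (fun i => k * x i).
Proof.
case: F_star => [[deg homF] _]; rewrite /zeroes /= => Fx0.
by rewrite (meval_homog_scale _ _ homF) Fx0 mulr0.
Qed.

Lemma div_star_zeroes_max (x : 'I_N.+1 -> K) :
  zeroes F x -> (forall i, x (wid i) != 0) -> x ord_max != 0.
Proof.
case: F_star => _ [e Fmax] Fx0 x_neq0; apply/eqP => /Fmax.
rewrite Fx0 => /esym/eqP; apply/negP.
by rewrite prodf_seq_neq0; apply/allP => i _; rewrite expf_neq0.
Qed.

End Divisor.

Section LogPlus.
Variable R : realType.

Lemma ln_max (x y : R) : 0 < x -> 0 < y -> ln (Num.max x y) = Num.max (ln x) (ln y).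
Proof.
move=> x_gt0 y_gt0; have [le_xy|lt_yx] := leP x y.
  by rewrite max_r // ler_ln.
by rewrite max_l // ler_ln // ltW.
Qed.

Lemma ler_powR_inv (n : nat) (x y : R) : (0 < n)%N -> 0 <= x ->
  x ^+ n <= y -> x <= y `^ (n%:R)^-1.
Proof.
move=> n_gt0 x_ge0 xn_le; have n_neq0 : n%:R != 0 :> R by rewrite pnatr_eq0 -lt0n.
have -> : x = (x ^+ n) `^ (n%:R)^-1 by rewrite -powR_mulrn // -powRrM mulfV ?powRr1.
by rewrite ge0_ler_powR ?nnegrE ?invr_ge0 ?ler0n ?exprn_ge0 // (le_trans _ xn_le) ?exprn_ge0.
Qed.

Lemma powR_inv_le (n : nat) (x y : R) : (0 < n)%N -> 0 <= x -> 0 <= y ->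
  x `^ (n%:R)^-1 <= y -> x <= y ^+ n.
Proof.
move=> n_gt0 x_ge0 y_ge0 le_y; have n_neq0 : n%:R != 0 :> R by rewrite pnatr_eq0 -lt0n.
rewrite -[x](@powRr1 _ _ x_ge0) -(mulVf n_neq0) powRrM powR_mulrn ?powR_ge0 //.
by rewrite lerXn2r ?nnegrE ?powR_ge0.
Qed.

Lemma elogp_fin (x : \bar R) : x != +oo%E -> elogp x = (ln (Num.max 1 (fine x)))%:E.
Proof. by case: x => [r| |] //= _; rewrite (max_l ler01) ln1. Qed.

Lemma lee_max1_fine (x : \bar R) : x != +oo%E -> (x <= (Num.max 1 (fine x))%:E)%E.
Proof. by case: x => [r| |] //= _; rewrite ?lee_fin ?le_max ?lexx ?orbT ?leNye. Qed.

Lemma elogp_le (x : \bar R) (L : R) : 1 <= L ->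
  (elogp x <= (ln L)%:E)%E = (x <= L%:E)%E.
Proof.
move=> L_ge1; have L_gt0 : 0 < L by exact: lt_le_trans ltr01 L_ge1.
case: x => [r| |] /=; rewrite ?leey ?leNye ?lee_fin ?ln_ge0 //.
by rewrite ler_ln ?posrE ?lt_max ?ltr01 // ge_max L_ge1.
Qed.

End LogPlus.

Section CoefBound.
Variables (K : fieldType) (R : realType) (v : K -> R) (N d : nat) (a : polyND K N d).

Definition coef_bound : R :=
  Num.max 1 (\big[Num.max/0]_(i < N) \big[Num.max/0]_(I : midx N d | ind_star I)
               (v (a i I) `^ ((I ord_max)%:R)^-1)).

Lemma BvE : Bv v a = ln coef_bound. Proof. by []. Qed.

Lemma coef_bound_ge1 : 1 <= coef_bound. Proof. by rewrite le_max lexx. Qed.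

Lemma absv_coef_le_bound (i : 'I_N) (I : midx N d) : (forall x, 0 <= v x) ->
  ind_star I -> v (a i I) <= coef_bound ^+ I ord_max.
Proof.
move=> v_ge0 indI; have I_gt0 : (0 < I ord_max)%N by case/and3P: indI.
have root_le : v (a i I) `^ ((I ord_max)%:R)^-1 <= coef_bound.
  rewrite le_max (le_trans _ (le_bigmax _ _ i)) ?orbT //.
  exact: (le_bigmax_cond _ (fun I => v (a i I) `^ ((I ord_max)%:R)^-1) indI).
exact: powR_inv_le I_gt0 (v_ge0 _) (le_trans ler01 coef_bound_ge1) root_le.
Qed.

End CoefBound.

Section LogSup.
Variables (R : realType) (T : Type) (P : set T) (f : T -> R) (A : R) (d : nat).
Hypotheses (A_ge1 : 1 <= A) (d_gt0 : (0 < d)%N).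

Let s := ereal_sup [set (f b)%:E | b in P].

Lemma elogp_le_mul_max (y : \bar R) :
  (forall L, A <= L -> (forall b, P b -> f b <= L) -> (y <= (L ^+ d)%:E)%E) ->
  (elogp y <= d%:R%:E * maxe (ln A)%:E (elogp s))%E.
Proof.
move=> y_le; have [s_oo|s_fin] := eqVneq s +oo%E.
  by rewrite s_oo /= maxey gt0_muley ?leey // lte_fin ltr0n.
pose L := Num.max A (fine s); have A_le_L : A <= L by rewrite le_max lexx.
have L_ge1 : 1 <= L := le_trans A_ge1 A_le_L.
have fL b : P b -> f b <= L.
  move=> Pb; rewrite le_max orbC; apply/orP; left.
  have : ((f b)%:E <= s)%E by apply: ereal_sup_ubound; exists b.
  by move: s_fin; case: s => [r| |] //= _; rewrite ?lee_fin ?leeNy_eq.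
have := y_le L A_le_L fL; rewrite -elogp_le ?exprn_ege1 // lnXn ?(lt_le_trans ltr01) //.
rewrite (elogp_fin s_fin) -EFin_max -ln_max ?lt_max ?ltr01 ?(lt_le_trans ltr01 A_ge1) //.
by rewrite maxA (max_l A_ge1) -EFinM mulr_natl.
Qed.

Lemma elogp_ge_mul (y : \bar R) :
  (forall b, P b -> A < f b -> (((f b) ^+ d)%:E <= y)%E) -> ((ln A)%:E < elogp s)%E ->
  (d%:R%:E * elogp s <= elogp y)%E.
Proof.
move=> y_ge lnA_lt; have [->|y_fin] := eqVneq y +oo%E; first by rewrite leey.
pose Y := Num.max 1 (fine y); pose Q := Y `^ (d%:R)^-1.
have fQ b : P b -> f b <= Num.max A Q.
  move=> Pb; rewrite le_max; have [//|A_lt] := leP (f b) A.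
  rewrite ler_powR_inv ?orbT ?(le_trans _ (ltW A_lt)) ?(le_trans ler01) //.
  by rewrite -lee_fin (le_trans (y_ge b Pb A_lt)) ?lee_max1_fine.
have s_le : (s <= (Num.max A Q)%:E)%E.
  by apply: ge_ereal_sup => _ [b Pb <-]; rewrite lee_fin fQ.
have := s_le; rewrite -elogp_le ?le_max ?A_ge1 // => elogp_s_le.
have Q_gt_A : A < Q.
  rewrite ltNge; apply/negP => Q_le_A; move: lnA_lt; rewrite ltNge.
  by rewrite (le_trans elogp_s_le) // (max_l Q_le_A).
move: elogp_s_le; rewrite (max_r (ltW Q_gt_A)) ln_powR elogp_fin ?elogp_fin //; last first.
  by move: s_le; case: s.
rewrite lee_fin => le_lnQ; rewrite -EFinM lee_fin.
rewrite -(ler_pM2l (_ : 0 < d%:R^-1)) ?invr_gt0 ?ltr0n //.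
by rewrite mulrA mulVf ?pnatr_eq0 -?lt0n // mul1r.
Qed.

End LogSup.

Section PushForward.
Variables (K : fieldType) (R : realType) (v : K -> R) (N d : nat).
Variables (a : polyND K N d) (F : mpoly.mpoly N.+1 K).
Hypotheses (v_abs : nonarch_abs v) (N_gt0 : (0 < N)%N) (d_gt0 : (0 < d)%N).
Hypothesis F_star : div_star F.

Local Open Scope classical_set_scope.

Local Notation unit_pts S := [set z | S z /\ forall i : 'I_N, v (z (wid i)) = 1].
Local Notation lambda_sup S :=
  (ereal_sup [set ((v (z ord_max))^-1)%:E | z in unit_pts S]).

Lemma lambda_push_sup_le (L : R) : coef_bound v a <= L ->
  (forall b, unit_pts (zeroes F) b -> (v (b ord_max))^-1 <= L) ->
  (lambda_sup (push_zeroes a F) <= (L ^+ d)%:E)%E.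
Proof.
move=> A_le_L D_le; apply: ge_ereal_sup => _ [_ [[c [x [Fx0 ->]]] y_unit] <-].
rewrite lee_fin.
have L_ge1 := le_trans (coef_bound_ge1 v a) A_le_L.
have coef_le i I : ind_star I -> v (a i I) <= L ^+ I ord_max.
  move=> indI; rewrite (le_trans (absv_coef_le_bound _ _ (absv_ge0 v_abs) indI)) //.
  apply: lerXn2r; rewrite ?nnegrE ?(le_trans ler01 L_ge1) //.
  exact: le_trans ler01 (coef_bound_ge1 v a).
have [//|[k [kx_unit small]]] := push_bound v_abs L_ge1 coef_le d_gt0 N_gt0 y_unit.
have kx_zero := div_star_zeroes_scale F_star k Fx0.
have kx_max_gt0 : 0 < v (k * x ord_max).
  rewrite (absv_gt0 v_abs) (div_star_zeroes_max F_star kx_zero) // => i.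
  by rewrite -(absv_gt0 v_abs) kx_unit.
have := D_le _ (conj kx_zero kx_unit).
by rewrite -[_^-1]mul1r ler_pdivrMr // leNgt small.
Qed.

Lemma lambda_push_sup_ge (b : 'I_N.+1 -> K) : unit_pts (zeroes F) b ->
  coef_bound v a < (v (b ord_max))^-1 ->
  ((((v (b ord_max))^-1) ^+ d)%:E <= lambda_sup (push_zeroes a F))%E.
Proof.
move=> [Fb0 b_unit] A_lt.
have b_max_gt0 : 0 < v (b ord_max).
  rewrite lt_neqAle (absv_ge0 v_abs) andbT; apply: contraTneq A_lt => <-.
  by rewrite invr0 -leNgt le_max ler01.
have small : coef_bound v a * v (b ord_max) < 1 by rewrite -ltr_pdivlMr // mul1r.
apply: ereal_sup_ubound; exists (fun i => 1 * fcomp a b i).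
  split; first by exists 1, b.
  have coef_le i I := @absv_coef_le_bound _ _ _ _ _ a i I (absv_ge0 v_abs).
  have b_le1 j : v (b (wid j)) <= 1 by rewrite b_unit.
  move=> i; rewrite mul1r.
  exact/(absv_fcomp_wid_eq1 v_abs (coef_bound_ge1 v a) coef_le d_gt0 i b_le1 small).
by rewrite mul1r fcomp_max (absvX v_abs) exprVn.
Qed.

End PushForward.

Unset Implicit Arguments.

Theorem lemma3p2 (R : realType) (K : closedFieldType) (v : K -> R)
    (N d : nat) (a : polyND K N d) (F : mpoly.mpoly N.+1 K) :
  (1 <= N)%N -> (2 <= d)%N ->
  nonarch_complete_abs v ->
  ([pchar K] =i pred0 \/ (forall p, p \in [pchar K] -> (d < p)%N)) ->
  div_star F ->
  (lambda_push v a F <= (d%:R)%:E * maxe (Bv v a)%:E (lambda_div v F))%E /\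
  (((Bv v a)%:E < lambda_div v F)%E ->
     lambda_push v a F = ((d%:R)%:E * lambda_div v F)%E).
Proof.
move=> N_gt0 d_ge2 /nonarch_complete_absW v_abs _ F_star.
have d_gt0 : (0 < d)%N by exact: leq_trans d_ge2.
have A_ge1 := coef_bound_ge1 v a.
have ub := elogp_le_mul_max A_ge1 d_gt0 (lambda_push_sup_le v_abs N_gt0 d_gt0 F_star).
rewrite BvE /lambda_push /lambda_div /lambda_set; split=> // lnA_lt; apply/le_anti.
rewrite (le_trans ub) ?(max_r (ltW lnA_lt)) //=.
apply: (elogp_ge_mul (f := fun b => (v (b ord_max))^-1) A_ge1 d_gt0) lnA_lt.
exact: lambda_push_sup_ge v_abs d_gt0.
Qed.
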